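(* Assume $f$ has a unique global maximizer, contains no weak epistasis, and every order-1 epistasis of $f$ is strict. If the maximum in-degree of the epistatic graph is $k$, then every strongly connected component of the epistatic graph has size at most $k+1$, and consequently the decomposition difficulty is at most $k+1$.
   Context: Fix $\ell\ge1$, loci $V=\{0,\dots,\ell-1\}$, chromosomes $\vec y\in\{0,1\}^V$, fitness $f:\{0,1\}^V\to\mathbb R$ (maximized) with unique global maximizer $g$. An assignment $A$ is a set of pairs $(v,a)$ with at most one pair per locus; coverage $\mathcal C(A)$; $A[v]$ its allele at $v$. $\Psi_A$ is the set of chromosomes agreeing with $A$ on $\mathcal C(A)$ with maximum fitness among such chromosomes; $\Psi_A[v]=\{\psi_v:\psi\in\Psi_A\}$. Epistasis: for $v\in V$ and nonempty $S\subseteq V\setminus\{v\}$, $S\Rightarrow v$ iff for every $s\in S$ there exists an assignment $A$ with $\mathcal C(A)=S$ and $\Psi_A[v]\neq\Psi_{A\setminus\{(s,A[s])\}}[v]$. An epistasis $S\Rightarrow v$ with $|S|\ge2$ is weak if no nonempty proper subset $T\subsetneq S$ has $T\Rightarrow v$. An order-1 epistasis $\{u\}\Rightarrow v$ is strict if $\Psi_{\{(u,1-g[u])\}}[v]=\{1-g[v]\}$. The epistatic graph (EG) is the directed graph on $V$ with edge $u\to v$ iff $\{u\}\Rightarrow v$. The decomposition difficulty is $\max(k_{SCC},k_{in}+1)$, where $k_{SCC}$ is the maximum size of a strongly connected component of the EG and $k_{in}$ its maximum in-degree. *)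

From mathcomp Require Import all_boot all_order all_algebra.
Set Implicit Arguments. Unset Strict Implicit. Unset Printing Implicit Defensive.
Import Order.TTheory GRing.Theory Num.Theory.
Local Open Scope ring_scope.

Section Epistasis.
Variable (ell : nat) (R : realDomainType).

Definition chrom := {ffun 'I_ell -> bool}.
Definition assignment := {ffun 'I_ell -> option bool}.

Definition coverage (A : assignment) : {set 'I_ell} := [set v | A v != None].

Definition agrees (A : assignment) (y : chrom) : bool :=
  [forall v, if A v is Some a then y v == a else true].

Definition Psi (f : chrom -> R) (A : assignment) : {set chrom} :=
  [set y | agrees A y && [forall z : chrom, agrees A z ==> (f z <= f y)]].

Definition PsiAt (f : chrom -> R) (A : assignment) (v : 'I_ell) : {set bool} :=
  [set (y : chrom) v | y in Psi f A].

Definition remove_locus (A : assignment) (s : 'I_ell) : assignment :=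
  [ffun w => if w == s then None else A w].

Definition single (u : 'I_ell) (a : bool) : assignment :=
  [ffun w => if w == u then Some a else None].

Definition epistasis (f : chrom -> R) (S : {set 'I_ell}) (v : 'I_ell) : bool :=
  [&& v \notin S, S != set0 &
   [forall s in S, exists A : assignment,
      (coverage A == S) && (PsiAt f A v != PsiAt f (remove_locus A s) v)]].

Definition weak_epistasis (f : chrom -> R) (S : {set 'I_ell}) (v : 'I_ell) : bool :=
  [&& 2 <= #|S|, epistasis f S v &
   ~~ [exists T : {set 'I_ell}, [&& T != set0, T \proper S & epistasis f T v]]]%N.

Definition no_weak_epistasis (f : chrom -> R) : Prop :=
  forall S v, ~~ weak_epistasis f S v.

Definition unique_global_maximizer (f : chrom -> R) (g : chrom) : Prop :=
  forall y : chrom, y != g -> f y < f g.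

Definition strict_order1 (f : chrom -> R) (g : chrom) (u v : 'I_ell) : Prop :=
  PsiAt f (single u (~~ g u)) v = [set ~~ g v].

Definition all_order1_strict (f : chrom -> R) (g : chrom) : Prop :=
  forall u v, epistasis f [set u] v -> strict_order1 f g u v.

Definition EG (f : chrom -> R) : rel 'I_ell := fun u v => epistasis f [set u] v.

Definition in_degree (f : chrom -> R) (v : 'I_ell) : nat := #|[set u | EG f u v]|.

Definition max_in_degree (f : chrom -> R) : nat := (\max_(v < ell) in_degree f v)%N.

Definition scc (f : chrom -> R) (u : 'I_ell) : {set 'I_ell} :=
  [set w | connect (EG f) u w && connect (EG f) w u].

Definition max_scc_size (f : chrom -> R) : nat := (\max_(u < ell) #|scc f u|)%N.

Definition decomposition_difficulty (f : chrom -> R) : nat :=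
  maxn (max_scc_size f) (max_in_degree f).+1.

End Epistasis.

(* Let P(u) be the set of fittest chromosomes with locus u flipped away from g.
   Strictness of an edge u -> v means every member of P(u) also has locus v
   flipped, so it competes in the optimisation defining P(v): the optimal
   fitness can only grow along edges.  Around a cycle it therefore stays
   constant, and inside a strongly connected component C of u we get
   P(u) ⊆ P(x) for every x in C.  Since the unique maximizer g is the only
   optimum once the flip at u is forgotten, this shows {u} => x for all
   x in C, i.e. u is an in-neighbour of every other vertex of C; applying
   this to each vertex gives #|C| - 1 <= k. *)
From mathcomp Require Import all_boot all_order all_algebra.
Import Order.TTheory GRing.Theory Num.Theory.

Set Implicit Arguments.
Unset Strict Implicit.
Unset Printing Implicit Defensive.

Section Optima.
Variables (ell : nat) (R : realDomainType) (f : chrom ell -> R).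

Lemma agrees_single (u : 'I_ell) a (y : chrom ell) :
  agrees (single u a) y = (y u == a).
Proof.
apply/forallP/eqP; first by move=> /(_ u); rewrite ffunE eqxx => /eqP.
by move=> yu v; rewrite ffunE; case: eqP => // ->; rewrite yu.
Qed.

Lemma PsiP (A : assignment ell) y :
  reflect (agrees A y /\ forall z, agrees A z -> (f z <= f y)%R)
          (y \in Psi f A).
Proof.
rewrite inE; apply: (iffP andP) => -[Ay ymax]; split => //.
  by move=> z Az; move/forallP/(_ z)/implyP: ymax; apply.
by apply/forallP => z; apply/implyP; apply: ymax.
Qed.

Lemma Psi_nonempty (A : assignment ell) y0 :
  agrees A y0 -> exists y, y \in Psi f A.
Proof.
move=> Ay0; have [y Ay ymax] := arg_maxP f Ay0.
by exists y; apply/PsiP; split=> // z; apply: ymax.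
Qed.

Lemma Psi_unconstrained (A : assignment ell) g :
  unique_global_maximizer f g -> (forall w, A w = None) -> Psi f A = [set g].
Proof.
move=> gmax A0; have Aall y : agrees A y by apply/forallP => v; rewrite A0.
apply/setP => y; rewrite [in RHS]inE; apply/PsiP/eqP => [[_ ymax] | ->].
  by apply/eqP/negPn/negP => /gmax; rewrite ltNge ymax.
split=> // z _; have [-> // | /gmax/ltW //] := eqVneq z g.
Qed.

End Optima.

Section StrictGraph.
Variables (ell : nat) (R : realDomainType) (f : chrom ell -> R) (g : chrom ell).
Hypothesis strict : all_order1_strict f g.

Definition flipPsi (u : 'I_ell) : {set chrom ell} := Psi f (single u (~~ g u)).

Lemma flipPsi_nonempty u : exists y, y \in flipPsi u.
Proof.
apply: (@Psi_nonempty _ _ f _ [ffun w => if w == u then ~~ g u else g w]).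
by rewrite agrees_single ffunE eqxx.
Qed.

Lemma flipPsi_edge u v y : EG f u v -> y \in flipPsi u -> y v = ~~ g v.
Proof.
move=> /strict uv_strict yP.
have : y v \in PsiAt f (single u (~~ g u)) v by apply/imsetP; exists y.
by rewrite uv_strict inE => /eqP.
Qed.

Lemma flipPsi_edge_le u v y z :
  EG f u v -> y \in flipPsi u -> z \in flipPsi v -> (f y <= f z)%R.
Proof.
move=> uv yP /PsiP[_ zmax]; apply: zmax.
by rewrite agrees_single (flipPsi_edge uv yP).
Qed.

Lemma flipPsi_connect_le a b y z :
  connect (EG f) a b -> y \in flipPsi a -> z \in flipPsi b -> (f y <= f z)%R.
Proof.
move=> /connectP[p + ->] {b}.
elim: p a y => [|c p IH] a y /=.
  by move=> _ /PsiP[Ay _] /PsiP[_ zmax]; apply: zmax.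
move=> /andP[ac cp] yP zP; have [w wP] := flipPsi_nonempty c.
exact: le_trans (flipPsi_edge_le ac yP wP) (IH _ _ cp wP zP).
Qed.

(* Going back from v to u bounds the optimum at v by the one at u. *)
Lemma flipPsi_cycle_edge_sub u v :
  EG f u v -> connect (EG f) v u -> {subset flipPsi u <= flipPsi v}.
Proof.
move=> uv vu y yP; apply/PsiP; split.
  by rewrite agrees_single (flipPsi_edge uv yP).
move=> z vz; have [w wP] := flipPsi_nonempty v.
have /PsiP[_ wmax] := wP.
exact: le_trans (wmax _ vz) (flipPsi_connect_le vu wP yP).
Qed.

Lemma flipPsi_scc_sub u x :
  connect (EG f) u x -> connect (EG f) x u -> {subset flipPsi u <= flipPsi x}.
Proof.
move=> /connectP[p + ->] {x}.
elim: p u => [|c p IH] u /=; first by move=> _ _ y.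
move=> /andP[uc cp] pu.
have cu : connect (EG f) c u by apply: connect_trans pu; apply/connectP; exists p.
have lc : connect (EG f) (last c p) c := connect_trans pu (connect1 uc).
by move=> y /(flipPsi_cycle_edge_sub uc cu); apply: IH cp lc y.
Qed.

Hypothesis gmax : unique_global_maximizer f g.

Lemma scc_out_edge u x :
  connect (EG f) u x -> connect (EG f) x u -> x != u -> EG f u x.
Proof.
move=> ux xu xNu; have [y yP] := flipPsi_nonempty u.
have /PsiP[] := flipPsi_scc_sub ux xu yP; rewrite agrees_single => /eqP yx _.
apply/and3P; split; first by rewrite inE.
  by apply/set0Pn; exists u; rewrite inE.
apply/forall_inP => s; rewrite inE => /eqP-> {s}.
apply/existsP; exists (single u (~~ g u)); apply/andP; split.
  by apply/eqP/setP => w; rewrite !inE ffunE; case: (w == u).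
rewrite /PsiAt [Psi f (remove_locus _ _)](Psi_unconstrained gmax); last first.
  by move=> w; rewrite !ffunE; case: (w == u).
apply/negP => /eqP PsiE.
have : y x \in PsiAt f (single u (~~ g u)) x by apply/imsetP; exists y.
by rewrite /PsiAt PsiE imset_set1 inE yx; case: (g x).
Qed.

Lemma card_scc_le_in_degree u : (#|scc f u| <= (in_degree f u).+1)%N.
Proof.
have uC : u \in scc f u by rewrite inE connect0.
rewrite (cardsD1 u) uC ltnS /in_degree; apply: subset_leq_card.
apply/subsetP => x; rewrite !inE => /andP[xNu /andP[ux xu]].
by apply: scc_out_edge xu ux _; rewrite eq_sym.
Qed.

End StrictGraph.

Theorem theorem8 (ell : nat) (R : realDomainType)
  (f : chrom ell -> R) (g : chrom ell) (k : nat) :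
  (0 < ell)%N ->
  unique_global_maximizer f g ->
  no_weak_epistasis f ->
  all_order1_strict f g ->
  max_in_degree f = k ->
  (forall u : 'I_ell, #|scc f u| <= k.+1)%N /\
  (decomposition_difficulty f <= k.+1)%N.
Proof.
move=> _ gmax _ strict <-.
have scc_le u : (#|scc f u| <= (max_in_degree f).+1)%N.
  apply: leq_trans (card_scc_le_in_degree strict gmax u) _.
  by rewrite ltnS; apply: (leq_bigmax u).
split=> //; rewrite /decomposition_difficulty geq_max leqnn andbT.
by apply/bigmax_leqP => u _; apply: scc_le.
Qed.
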